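(* For $n\ge1$ and all $k\ge0$, $$S(n,k)=T(n,2k)+T(n,2k+1),\qquad P(n,k)=T(n,2k+1)+T(n,2k+2);$$ equivalently, $(1+x)T_n(x)=xS_n(x^2)+x^2P_n(x^2)$ for $n\ge1$.
   Context: For a permutation $\pi$ of $[n]=\{1,\dots,n\}$, ${\rm des}(\pi)=\#\{i\in[n-1]:\pi(i)>\pi(i+1)\}$. A double descent is an index $i\in[n-2]$ with $\pi(i)>\pi(i+1)>\pi(i+2)$; $\pi$ is simsun if for every $k\in[n]$ the subword of $\pi$ consisting of the letters in $[k]$ (in order of appearance) has no double descents. Let $\mathcal{RS}_n$ be the set of simsun permutations of $[n]$. $S(n,k)=\#\{\pi\in\mathcal{RS}_n:{\rm des}(\pi)=k\}$, $S_n(x)=\sum_kS(n,k)x^k$. An interior peak is an index $i\in\{2,\dots,n-1\}$ with $\pi(i-1)<\pi(i)>\pi(i+1)$, ${\rm pk}(\pi)$ their number, $P(n,k)=\#\{\pi\in\mathcal{RS}_n:{\rm pk}(\pi)=k\}$, $P_n(x)=\sum_kP(n,k)x^k$. The number of up-down runs ${\rm uprun}(\pi)$ is the number of alternating runs of the sequence $0,\pi(1),\dots,\pi(n)$ (one plus the number of interior positions where the sequence changes direction); $T(n,k)=\#\{\pi\in\mathcal{RS}_n:{\rm uprun}(\pi)=k\}$ and $T_n(x)=\sum_kT(n,k)x^k$. *)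

From mathcomp Require Import all_boot all_order.
From mathcomp Require Import perm.
Set Implicit Arguments. Unset Strict Implicit. Unset Printing Implicit Defensive.

(* A permutation pi of [n] is represented by s : {perm 'I_n};
   pi(i+1) corresponds to (s i) + 1, i.e. the one-line word of pi is
   [seq (val (s i)).+1 | i <- enum 'I_n], with letters in 1..n. *)
Definition word (n : nat) (s : {perm 'I_n}) : seq nat :=
  [seq (val (s i)).+1 | i <- enum 'I_n].

Definition des_seq (w : seq nat) : nat :=
  \sum_(i < (size w).-1) (nth 0 w i.+1 < nth 0 w i).

Definition has_ddes (w : seq nat) : bool :=
  [exists i : 'I_(size w), (i.+2 < size w) &&
     (nth 0 w i.+1 < nth 0 w i) && (nth 0 w i.+2 < nth 0 w i.+1)].

Definition simsun (n : nat) (s : {perm 'I_n}) : bool :=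
  [forall k : 'I_n, ~~ has_ddes [seq x <- word s | x <= k.+1]].

Definition pk_seq (w : seq nat) : nat :=
  \sum_(i < (size w).-2) ((nth 0 w i < nth 0 w i.+1) && (nth 0 w i.+2 < nth 0 w i.+1)).

Definition altruns (a : seq nat) : nat :=
  1 + \sum_(i < (size a).-2)
        ((nth 0 a i < nth 0 a i.+1) != (nth 0 a i.+1 < nth 0 a i.+2)).

Definition uprun (n : nat) (s : {perm 'I_n}) : nat := altruns (0 :: word s).

Definition S_num (n k : nat) : nat :=
  #|[set s : {perm 'I_n} | simsun s && (des_seq (word s) == k)]|.
Definition P_num (n k : nat) : nat :=
  #|[set s : {perm 'I_n} | simsun s && (pk_seq (word s) == k)]|.
Definition T_num (n k : nat) : nat :=
  #|[set s : {perm 'I_n} | simsun s && (uprun s == k)]|.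

From mathcomp Require Import all_boot all_order.
From mathcomp Require Import perm zify.
Set Implicit Arguments. Unset Strict Implicit. Unset Printing Implicit Defensive.

(* A simsun word of length m+1 arises in exactly one way by inserting m+1 into a
   simsun word of length m, at any slot not immediately followed by a descent.
   For a parent with d descents, the multiset of pairs (descents, starts with a
   descent) over its children depends only on the parent's own such pair, and
   the pairs (descents, ends with a descent) obey exactly the same rule
   [children_profile].  By induction the two pairs are equidistributed on simsun
   words.  As simsun words have no double descents, their up-down runs number
   2 des + [no final descent] and their peaks des - [initial descent]; counting
   both sides of each identity through these pairs gives the theorem. *)

Definition first_descent (w : seq nat) : bool :=
  if w is x :: y :: _ then y < x else false.

Fixpoint last_descent (w : seq nat) : bool :=
  match w with
  | x :: (y :: t) as u => if t is [::] then y < x else last_descent u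
  | _ => false
  end.

Fixpoint descents (w : seq nat) : nat :=
  if w is _ :: u then first_descent w + descents u else 0.

Fixpoint ddes_free (w : seq nat) : bool :=
  if w is _ :: u then ~~ (first_descent w && first_descent u) && ddes_free u else true.

Fixpoint count_windows3 (p : nat -> nat -> nat -> bool) (w : seq nat) : nat :=
  if w is x :: u then (if u is y :: z :: _ then p x y z else false) + count_windows3 p u
  else 0.

Definition peaks : seq nat -> nat := count_windows3 (fun x y z => (x < y) && (z < y)).
Definition turns : seq nat -> nat := count_windows3 (fun x y z => (x < y) != (y < z)).

Lemma descents_cons x u : descents (x :: u) = first_descent (x :: u) + descents u.
Proof. by []. Qed.

Lemma ddes_free_cons x u :
  ddes_free (x :: u) = ~~ (first_descent (x :: u) && first_descent u) && ddes_free u.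
Proof. by []. Qed.

Lemma count_windows3_cons3 p x y z t :
  count_windows3 p [:: x, y, z & t] = p x y z + count_windows3 p [:: y, z & t].
Proof. by []. Qed.

Lemma des_seqE w : des_seq w = descents w.
Proof.
elim: w => [|x [|y u] IH]; try by rewrite /des_seq big_ord0.
by rewrite descents_cons -IH /des_seq [LHS]big_ord_recl.
Qed.

Lemma sum_windows3 (p : nat -> nat -> nat -> bool) w :
  \sum_(i < (size w).-2) p (nth 0 w i) (nth 0 w i.+1) (nth 0 w i.+2) = count_windows3 p w.
Proof.
elim: w => [|x [|y [|z u]] IH]; rewrite ?big_ord0 //.
by rewrite [LHS]big_ord_recl count_windows3_cons3 -IH.
Qed.

Lemma pk_seqE w : pk_seq w = peaks w.
Proof. exact: sum_windows3. Qed.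

Lemma altrunsE a : altruns a = 1 + turns a.
Proof. by rewrite /altruns; congr (_ + _); apply: sum_windows3. Qed.

Lemma exists_ord_has_iota n (p : pred nat) : [exists i : 'I_n, p i] = has p (iota 0 n).
Proof.
apply/existsP/hasP => [[i pi]|[i]].
  by exists (nat_of_ord i); rewrite ?mem_iota ?add0n ?ltn_ord.
by rewrite mem_iota => lt_in pi; exists (Ordinal lt_in).
Qed.

Lemma has_ddesE w : has_ddes w = ~~ ddes_free w.
Proof.
rewrite /has_ddes (exists_ord_has_iota _ (fun i =>
  (i.+2 < size w) && (nth 0 w i.+1 < nth 0 w i) && (nth 0 w i.+2 < nth 0 w i.+1))).
elim: w => [//|x u IH] /=.
rewrite (iotaDl 1 0) has_map /preim /= negb_and negbK -IH.
by congr (_ || _); case: u {IH} => [|y [|z u]] //=; rewrite andbF.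
Qed.

Lemma peaks_add_first_descent v : uniq v -> ddes_free v ->
  peaks v + first_descent v = descents v.
Proof.
elim: v => [//|x [|y [|z t]] IH] // /andP [xv Uv] /andP [noddx noddv].
  by rewrite /peaks /= !addn0.
have xy : x != y by apply: contraNneq xv => ->; rewrite mem_head.
rewrite /peaks count_windows3_cons3 -/peaks descents_cons -(IH Uv noddv).
move: xy noddx; rewrite [first_descent _]/= [first_descent (y :: _)]/=.
clear; case: (ltngtP x y); case: (ltnP z y) => //= *; lia.
Qed.

Lemma turns_descents v : 1 < size v -> uniq v -> ddes_free v ->
  turns v + first_descent v + last_descent v = 2 * descents v.
Proof.
elim: v => [//|x [|y [|z t]] IH] // _ /andP [xv Uv] /andP [noddx noddv].
  by rewrite /turns /=; case: (y < x).
have xy : x != y by apply: contraNneq xv => ->; rewrite mem_head.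
have yz : y != z by case/andP: Uv; rewrite inE negb_or => /andP [].
rewrite /turns count_windows3_cons3 -/turns descents_cons.
have -> : last_descent [:: x, y, z & t] = last_descent [:: y, z & t] by [].
move: xy yz noddx (IH isT Uv noddv).
rewrite ![first_descent _]/=.
move: (turns _) (last_descent _) (descents _) => a b c.
clear; case: (ltngtP x y); case: (ltngtP y z) => //= *; lia.
Qed.

Lemma uprun_descents w : w != [::] -> uniq (0 :: w) -> ddes_free w ->
  altruns (0 :: w) = 2 * descents w + ~~ last_descent w.
Proof.
case: w => [//|x t] _ U noddw.
have noddw0 : ddes_free [:: 0, x & t] by rewrite ddes_free_cons noddw.
have := @turns_descents [:: 0, x & t] isT U noddw0.
have first0 : first_descent [:: 0, x & t] = false by exact: ltn0.
have last0 : last_descent [:: 0, x & t] = last_descent (x :: t) by case: t {U noddw noddw0 first0}.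
rewrite altrunsE descents_cons first0 last0.
by move: (turns _) (last_descent _) (descents _) => a b c; clear; lia.
Qed.

Fixpoint insertions (N : nat) (w : seq nat) : seq (seq nat) :=
  if w is x :: t then (N :: w) :: map (cons x) (insertions N t) else [:: [:: N]].

Definition simsun_children (N : nat) (w : seq nat) : seq (seq nat) :=
  filter ddes_free (insertions N w).

Fixpoint simsun_words (m : nat) : seq (seq nat) :=
  if m is m'.+1 then flatten [seq simsun_children m'.+1 w | w <- simsun_words m']
  else [:: [::]].

Definition simsun_word (n : nat) (w : seq nat) : bool :=
  all (fun k => ddes_free [seq x <- w | x <= k]) (iota 1 n).

Lemma perm_insertions N s w : w \in insertions N s -> perm_eq w (N :: s).
Proof.
elim: s w => [|x t IH] w /=; first by rewrite inE => /eqP ->.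
rewrite inE => /orP [/eqP -> //|/mapP [w' /IH w'_perm ->]].
apply: (@perm_trans _ (x :: N :: t)); first by rewrite perm_cons.
by rewrite (perm_catCA [:: x] [:: N] t).
Qed.

Lemma filter_insertions N s w (a : pred nat) :
  w \in insertions N s -> ~~ a N -> filter a w = filter a s.
Proof.
move=> + aN; elim: s w => [|x t IH] w /=; first by rewrite inE => /eqP -> /=; rewrite (negbTE aN).
rewrite inE => /orP [/eqP -> /=|/mapP [w' /IH eqw' ->] /=]; first by rewrite (negbTE aN).
by rewrite eqw'.
Qed.

Lemma insertions_rem N w : N \in w -> w \in insertions N (rem N w).
Proof.
elim: w => [//|y t IH]; rewrite inE.
have [-> _|neNy /= /IH Nt] := eqVneq y N.
  by case: t {IH} => [|z t]; rewrite /= eqxx mem_head.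
by rewrite (negbTE neNy) inE map_f ?orbT.
Qed.

Lemma rem_insertions N s w : N \notin s -> w \in insertions N s -> rem N w = s.
Proof.
elim: s w => [|x t IH] w /=; first by move=> _; rewrite inE => /eqP -> /=; rewrite eqxx.
rewrite inE negb_or => /andP [neNx Nt].
rewrite inE => /orP [/eqP -> /=|/mapP [w' Hw' ->] /=]; first by rewrite eqxx.
by rewrite eq_sym (negbTE neNx) (IH _ Nt Hw').
Qed.

Lemma insertions_uniq N s : N \notin s -> uniq (insertions N s).
Proof.
elim: s => [//|x t IH]; rewrite inE negb_or => /andP [neNx Nt] /=.
rewrite map_inj_uniq ?IH // ?andbT; last by move=> u v [].
by apply/mapP => [[w _ [eqNx _]]]; rewrite eqNx eqxx in neNx.
Qed.

Lemma size_insertions N s w : w \in insertions N s -> size w = (size s).+1.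
Proof. by move/perm_insertions/perm_size. Qed.

Lemma iota1S m : iota 1 m.+1 = rcons (iota 1 m) m.+1.
Proof. by rewrite -cats1 -[m.+1]addn1 iotaD /= add1n addn1. Qed.

Lemma simsun_word_insertion m s w : w \in insertions m.+1 s ->
  simsun_word m w = simsun_word m s.
Proof.
move=> ins_w; apply: eq_in_all => k; rewrite mem_iota => /andP [_ lt_km].
by rewrite (filter_insertions (a := fun x => x <= k) ins_w) // -ltnNge ltnS -ltnS.
Qed.

Lemma filter_le_perm_iota n w : perm_eq w (iota 1 n) -> [seq x <- w | x <= n] = w.
Proof. by move=> perm_w; apply/all_filterP/allP => x; rewrite (perm_mem perm_w) mem_iota; lia. Qed.

Lemma mem_simsun_words m w :
  (w \in simsun_words m) = perm_eq w (iota 1 m) && simsun_word m w.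
Proof.
elim: m w => [|m IH] w.
  rewrite inE /simsun_word andbT; apply/eqP/idP => [->//|perm_w].
  by apply/eqP; rewrite -size_eq0 (perm_size perm_w).
rewrite /simsun_word iota1S all_rcons -/(simsun_word m w).
apply/flatten_mapP/and3P => [[s] | [perm_w nodd_w sim_w]].
  rewrite IH mem_filter => /andP [perm_s sim_s] /andP [nodd_w ins_w].
  have perm_w : perm_eq w (iota 1 m.+1).
    apply: perm_trans (perm_insertions ins_w) _.
    by rewrite iota1S perm_sym perm_rcons perm_cons perm_sym.
  rewrite -iota1S perm_w (filter_le_perm_iota perm_w) nodd_w.
  by rewrite (simsun_word_insertion ins_w).
rewrite -iota1S in perm_w; rewrite (filter_le_perm_iota perm_w) in nodd_w.
have Nw : m.+1 \in w by rewrite (perm_mem perm_w) mem_iota; lia.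
have ins_w := insertions_rem Nw.
exists (rem m.+1 w); last by rewrite mem_filter nodd_w.
rewrite IH -(simsun_word_insertion ins_w) sim_w andbT.
rewrite -(perm_cons m.+1) perm_sym -perm_rcons -iota1S perm_sym.
by apply: (perm_trans _ perm_w); rewrite perm_sym perm_to_rem.
Qed.

Lemma simsun_wordsP m w : w \in simsun_words m ->
  [/\ size w = m, all (fun y => y < m.+1) w, uniq (0 :: w) & ddes_free w].
Proof.
rewrite mem_simsun_words => /andP [perm_w sim_w]; split.
- by rewrite (perm_size perm_w) size_iota.
- by apply/allP => x; rewrite (perm_mem perm_w) mem_iota; lia.
- by rewrite (@perm_uniq _ _ (iota 0 m.+1)) ?iota_uniq // perm_cons.
case: m perm_w sim_w => [/perm_nilP -> //|m] perm_w /allP /(_ m.+1).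
by rewrite (filter_le_perm_iota perm_w) mem_iota; apply; lia.
Qed.

Lemma uniq_flatten_map (T S : eqType) (f : T -> seq S) s : uniq s ->
  {in s, forall x, uniq (f x)} ->
  (forall x y z, x \in s -> y \in s -> z \in f x -> z \in f y -> x = y) ->
  uniq (flatten (map f s)).
Proof.
elim: s => [//|x s IH] /= /andP [xs Us] Uf disj.
rewrite cat_uniq Uf ?mem_head //= IH //; first last.
- by move=> a b z a_s b_s; apply: disj; rewrite inE ?a_s ?b_s orbT.
- by move=> a a_s; apply: Uf; rewrite inE a_s orbT.
rewrite andbT; apply/hasP => [[z /flatten_mapP [y ys zy] zx]].
have eq_xy : x = y by apply: (disj x y z); rewrite ?mem_head ?inE ?ys ?orbT.
by rewrite eq_xy ys in xs.
Qed.

Lemma simsun_words_uniq m : uniq (simsun_words m).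
Proof.
elim: m => [//|m IH] /=.
have notin_N s : s \in simsun_words m -> m.+1 \notin s.
  by rewrite mem_simsun_words => /andP [perm_s _]; rewrite (perm_mem perm_s) mem_iota; lia.
apply: uniq_flatten_map => // [s /notin_N /insertions_uniq|x y z /notin_N Nx /notin_N Ny].
  exact: filter_uniq.
rewrite !mem_filter => /andP [_ zx] /andP [_ zy].
by rewrite -(rem_insertions Nx zx) (rem_insertions Ny zy).
Qed.

Lemma simsunE n (s : {perm 'I_n}) : simsun s = simsun_word n (word s).
Proof.
apply/forallP/allP => [sim_s k|sim_w k]; last first.
  by rewrite has_ddesE negbK; apply: sim_w; rewrite mem_iota /=; have := ltn_ord k; lia.
rewrite mem_iota => /andP [k_gt0 k_le].
have lt_k1n : k.-1 < n by lia.
by have := sim_s (Ordinal lt_k1n); rewrite has_ddesE negbK /= prednK.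
Qed.

Lemma perm_word_iota n (s : {perm 'I_n}) : perm_eq (word s) (iota 1 n).
Proof.
have -> : iota 1 n = [seq (val i).+1 | i <- enum 'I_n].
  by rewrite (iotaDl 1 0) -val_enum_ord -map_comp.
rewrite /word (map_comp (fun i : 'I_n => (val i).+1) s); apply: perm_map.
apply: uniq_perm; first by rewrite (map_inj_uniq (@perm_inj _ s)) enum_uniq.
  exact: enum_uniq.
by move=> i; rewrite mem_enum -(permKV s i) map_f ?mem_enum.
Qed.

Lemma word_inj n : injective (@word n).
Proof.
move=> s1 s2 /eq_in_map eq_s; apply/permP => i; apply: val_inj.
by have [] := eq_s i (mem_enum _ i).
Qed.

Lemma perm_words_permutations n :
  perm_eq (map (@word n) (enum {perm 'I_n})) (permutations (iota 1 n)).
Proof.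
have uniq_words : uniq (map (@word n) (enum {perm 'I_n})).
  by rewrite map_inj_uniq ?enum_uniq //; apply: word_inj.
have sub_words : {subset map (@word n) (enum {perm 'I_n}) <= permutations (iota 1 n)}.
  by move=> w /mapP [s _ ->]; rewrite mem_permutations perm_word_iota.
apply: uniq_perm; rewrite ?permutations_uniq //.
have size_le : size (permutations (iota 1 n)) <= size (map (@word n) (enum {perm 'I_n})).
  by rewrite size_permutations ?iota_uniq // size_iota size_map -cardE card_Sn.
by have [] := uniq_min_size uniq_words sub_words size_le.
Qed.

Lemma card_simsun n (Q : pred (seq nat)) :
  #|[set s : {perm 'I_n} | simsun s && Q (word s)]| = count Q (simsun_words n).
Proof.
have perm_simsun : perm_eq (filter (simsun_word n) (permutations (iota 1 n))) (simsun_words n).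
  apply: uniq_perm; rewrite ?filter_uniq ?permutations_uniq ?simsun_words_uniq // => w.
  by rewrite mem_filter mem_permutations mem_simsun_words andbC.
rewrite cardsE cardE /enum_mem size_filter -enumT.
rewrite (eq_count (a2 := preim (@word n) (fun w => simsun_word n w && Q w))); last first.
  by move=> s; rewrite /= -simsunE.
rewrite -count_map (seq.permP (perm_words_permutations n)).
by rewrite -(seq.permP perm_simsun) count_filter; apply: eq_count => w; rewrite /= andbC.
Qed.

Lemma first_descent_cons_insertion N x t w : x < N -> w \in insertions N t ->
  first_descent (x :: w) -> first_descent (x :: t).
Proof.
move=> xN; case: t => [|h t]; rewrite inE ?orbF.
  by move=> /eqP -> /=; rewrite (leq_gtF (ltnW xN)).
by case/orP => [/eqP -> /=|/mapP [w' _ ->] //]; rewrite (leq_gtF (ltnW xN)).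
Qed.

Lemma ddes_free_cons_insertion N x t w : x < N -> all (fun y => y < N) t ->
  ddes_free (x :: t) -> w \in insertions N t -> ddes_free (x :: w) = ddes_free w.
Proof.
move=> xN tN; rewrite ddes_free_cons (ddes_free_cons x) => /andP [noddxt _].
case: t tN noddxt => [|h t] tN noddxt; rewrite inE ?orbF.
  by move=> /eqP -> /=; rewrite (leq_gtF (ltnW xN)).
case/orP => [/eqP -> /=|/mapP [w' ins_w' ->]]; first by rewrite (leq_gtF (ltnW xN)).
have hN : h < N by case/andP: tN.
suff -> : ~~ (first_descent [:: x, h & w'] && first_descent (h :: w')) by [].
apply: contra noddxt => /andP [hx /(first_descent_cons_insertion hN ins_w') ht].
exact/andP.
Qed.

Lemma simsun_children_cons N x t : all (fun y => y < N) (x :: t) -> ddes_free (x :: t) ->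
  simsun_children N (x :: t) =
  (if first_descent (x :: t) then [::] else [:: N :: x :: t]) ++
  map (cons x) (simsun_children N t).
Proof.
move=> /andP [xN tN] noddxt.
have nodd_Nxt : ddes_free [:: N, x & t] = ~~ first_descent (x :: t).
  by rewrite ddes_free_cons noddxt andbT [first_descent [:: N, x & t]]/= xN.
rewrite {1}/simsun_children [insertions _ _]/= -cat1s filter_cat.
rewrite -[[:: [:: N, x & t]]]/(nseq 1 _) filter_nseq nodd_Nxt filter_map.
rewrite (eq_in_filter (a1 := preim (cons x) ddes_free) (a2 := ddes_free)); last first.
  by move=> w; apply: ddes_free_cons_insertion.
by case: (first_descent (x :: t)).
Qed.

Definition des_first (w : seq nat) : nat * bool := (descents w, first_descent w).
Definition des_last (w : seq nat) : nat * bool := (descents w, last_descent w).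

(* The pairs of the children of a parent with m letters, d descents and flag b:
   of the m + 1 slots, the d slots just before a descent are forbidden, the d
   slots inside a descent and the final slot keep d descents, and the other
   m - 2d slots add one.  The truncated subtractions are exact by
   [descents_first_bound] and [descents_last_bound]. *)
Definition children_profile (m d : nat) (b : bool) : seq (nat * bool) :=
  if b then (d, false) :: nseq (m - 2 * d) (d.+1, true) ++ nseq d (d, true)
  else (d.+1, true) :: nseq (m - 2 * d - 1) (d.+1, false) ++ nseq d.+1 (d, false).

Lemma descents_last_bound x t : t != [::] -> ddes_free (x :: t) ->
  2 * descents (x :: t) + ~~ last_descent (x :: t) <= size t + first_descent (x :: t).
Proof.
elim: t x => [//|y [|z t] IH] x _; first by rewrite /=; case: (y < x).
rewrite ddes_free_cons => /andP [noddx /(IH y isT) bound].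
rewrite descents_cons (_ : last_descent [:: x, y, z & t] = last_descent [:: y, z & t]) //.
move: noddx bound; rewrite [first_descent [:: x, y & _]]/=.
move: (first_descent _) (descents _) (last_descent _) => b d l /=.
by case: (y < x) => /=; lia.
Qed.

Lemma descents_first_bound x t : ddes_free (x :: t) ->
  2 * descents (x :: t) + ~~ first_descent (x :: t) <= (size t).+1.
Proof.
case: t => [//|y t] nodd; have := @descents_last_bound x (y :: t) isT nodd.
by move: (first_descent _) (last_descent _) => b l; case: b; case: l => /=; lia.
Qed.

Ltac case_on_values f := repeat match goal with |- context [f ?x] => case: (f x) end.

(* The children of x :: t, with a = [x :: t starts with a descent] and b = [t
   does], are N :: x :: t, present iff ~~ a, and x :: c for the children c of t,
   with a more descents; for c = N :: t (present iff ~~ b) the initial-descent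
   flag changes as well. *)
Lemma children_profile_first_step (a b : bool) d m (rest : seq (nat * bool)) :
  ~~ (a && b) -> 2 * d + ~~ b <= m ->
  perm_eq ((if b then [::] else [:: (d.+1, true)]) ++ rest) (children_profile m d b) ->
  perm_eq ((if a then [::] else [:: ((a + d).+1, true)]) ++
           ((if b then [::] else [:: (d.+1, false)]) ++ map (fun st => (a + st.1, a)) rest))
          (children_profile m.+1 (a + d) a).
Proof.
move=> nodd bound /seq.permP count_rest; apply/seq.permP => p.
move: (count_rest (preim (fun st => (a + st.1, a)) p)) => {count_rest}.
rewrite !count_cat count_map /children_profile.
move: nodd bound; case: a; case: b => //= _ bound.
all: rewrite ?count_cat ?count_nseq /= ?count_nseq /= ?add0n ?add1n.
all: by case_on_values p; rewrite /= ?mul1n ?mul0n; lia.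
Qed.

Lemma children_profile_last_step (a b l : bool) d m (rest : seq (nat * bool)) :
  ~~ (a && b) -> 2 * d + ~~ l <= m + b ->
  perm_eq ((if b then [::] else [:: (d.+1, l)]) ++ rest) (children_profile m.+1 d l) ->
  perm_eq ((if a then [::] else [:: ((a + d).+1, l)]) ++
           ((if b then [::] else [:: (d.+1, l)]) ++ map (fun st => (a + st.1, st.2)) rest))
          (children_profile m.+2 (a + d) l).
Proof.
move=> nodd bound /seq.permP count_rest; apply/seq.permP => p.
move: (count_rest (preim (fun st => (a + st.1, st.2)) p)) => {count_rest}.
rewrite !count_cat count_map /children_profile.
move: nodd bound; case: a; case: b; case: l => //= _ bound.
all: rewrite ?count_cat ?count_nseq /= ?count_nseq /= ?add0n ?add1n.
all: by case_on_values p; rewrite /= ?mul1n ?mul0n; lia.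
Qed.

Lemma des_first_children N x t : all (fun y => y < N) (x :: t) -> ddes_free (x :: t) ->
  perm_eq (map des_first (simsun_children N (x :: t)))
          (children_profile (size t).+1 (descents (x :: t)) (first_descent (x :: t))).
Proof.
elim: t x => [|y t IH] x ltN nodd.
  have xN : x < N by case/andP: ltN.
  by rewrite simsun_children_cons //= /des_first /= xN (leq_gtF (ltnW xN)).
have [xN ltN'] : x < N /\ all (fun y => y < N) (y :: t) by apply/andP.
have yN : y < N by case/andP: ltN'.
move: (nodd); rewrite ddes_free_cons => /andP [nodd_xy nodd'].
move: (IH y ltN' nodd').
rewrite !simsun_children_cons //.
set R := map (cons y) (simsun_children N t).
set a := first_descent [:: x, y & t]; set b := first_descent (y :: t); set d := descents (y :: t).
have top : map des_first [:: [:: N, x, y & t]] = [:: ((a + d).+1, true)].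
  by rewrite /= /des_first descents_cons [first_descent [:: N, x & _]]/= xN.
have below : map des_first [:: [:: x, N, y & t]] = [:: (d.+1, false)].
  rewrite /= /des_first !descents_cons [first_descent [:: x, N & _]]/= (leq_gtF (ltnW xN)).
  by rewrite [first_descent [:: N, y & _]]/= yN.
have shift : map des_first (map (cons x) R) = map (fun st => (a + st.1, a)) (map des_first R).
  by rewrite /R -!map_comp; apply: eq_map.
have top_y : map des_first [:: [:: N, y & t]] = [:: (d.+1, true)].
  by rewrite /= /des_first descents_cons [first_descent [:: N, y & _]]/= yN.
rewrite !map_cat shift !(fun_if (map (cons x))) !(fun_if (map des_first)) top below top_y /=.
by move/children_profile_first_step; apply => //; apply: descents_first_bound.
Qed.

Lemma des_last_children N x t : all (fun y => y < N) (x :: t) -> ddes_free (x :: t) ->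
  perm_eq (map des_last (simsun_children N (x :: t)))
          (children_profile (size t).+1 (descents (x :: t)) (last_descent (x :: t))).
Proof.
elim: t x => [|y t IH] x ltN nodd.
  have xN : x < N by case/andP: ltN.
  by rewrite simsun_children_cons //= /des_last /= xN (leq_gtF (ltnW xN)).
have [xN ltN'] : x < N /\ all (fun y => y < N) (y :: t) by apply/andP.
have yN : y < N by case/andP: ltN'.
move: (nodd); rewrite ddes_free_cons => /andP [nodd_xy nodd'].
case: t => [|z t] in IH ltN ltN' nodd nodd_xy nodd' *.
  rewrite !simsun_children_cons //= /des_last.
  by case yx: (y < x) => /=;
    rewrite ?yx ?xN ?yN ?(leq_gtF (ltnW xN)) ?(leq_gtF (ltnW yN)).
move: (IH y ltN' nodd').
rewrite (simsun_children_cons (x := x)) // (simsun_children_cons (x := y)) //.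
set R := map (cons y) (simsun_children N (z :: t)).
set a := first_descent [:: x, y, z & t]; set b := first_descent [:: y, z & t].
set d := descents [:: y, z & t]; set l := last_descent [:: y, z & t].
have top : map des_last [:: [:: N, x, y, z & t]] = [:: ((a + d).+1, l)].
  by rewrite /= /des_last descents_cons [first_descent [:: N, x & _]]/= xN.
have below : map des_last [:: [:: x, N, y, z & t]] = [:: (d.+1, l)].
  rewrite /= /des_last !descents_cons [first_descent [:: x, N & _]]/= (leq_gtF (ltnW xN)).
  by rewrite [first_descent [:: N, y & _]]/= yN.
have top_y : map des_last [:: [:: N, y, z & t]] = [:: (d.+1, l)].
  by rewrite /= /des_last descents_cons [first_descent [:: N, y & _]]/= yN.
have shift : map des_last (map (cons x) R) = map (fun st => (a + st.1, st.2)) (map des_last R).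
  rewrite /R -!map_comp; apply/eq_in_map => u; rewrite mem_filter => /andP [_].
  by case: u => [/size_insertions //|u0 u].
rewrite !map_cat shift !(fun_if (map (cons x))) !(fun_if (map des_last)) top below top_y /=.
by move/children_profile_last_step; apply => //; apply: descents_last_bound.
Qed.

Lemma perm_in_flatten_map (T S : eqType) (f g : T -> seq S) s :
  {in s, forall x, perm_eq (f x) (g x)} ->
  perm_eq (flatten (map f s)) (flatten (map g s)).
Proof.
elim: s => [//|x s IH] fg /=.
by rewrite perm_cat ?fg ?mem_head // IH // => y ys; apply: fg; rewrite inE ys orbT.
Qed.

Lemma simsun_wordsS m :
  simsun_words m.+1 = flatten [seq simsun_children m.+1 w | w <- simsun_words m].
Proof. by []. Qed.

Lemma perm_des_first_last m : 0 < m ->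
  perm_eq (map des_first (simsun_words m)) (map des_last (simsun_words m)).
Proof.
elim: m => [//|[|m] IH] _ //.
pose profile (st : nat * bool) := children_profile m.+1 st.1 st.2.
have parentP w : w \in simsun_words m.+1 -> exists x t,
    [/\ w = x :: t, size t = m, all (fun y => y < m.+2) (x :: t) & ddes_free (x :: t)].
  case/simsun_wordsP; case: w => [//|x t] [size_t] ltN _ nodd.
  by exists x, t.
rewrite simsun_wordsS (map_flatten des_first) (map_flatten des_last) -!map_comp.
apply: (@perm_trans _ (flatten (map profile (map des_first (simsun_words m.+1))))).
  rewrite -map_comp; apply: perm_in_flatten_map => w /parentP [x [t [-> size_t ltN nodd]]].
  by have := des_first_children ltN nodd; rewrite size_t; apply.
apply: (@perm_trans _ (flatten (map profile (map des_last (simsun_words m.+1))))).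
  by apply: perm_flatten; apply: perm_map; apply: IH.
rewrite -map_comp perm_sym; apply: perm_in_flatten_map => w /parentP [x [t [-> size_t ltN nodd]]].
by have := des_last_children ltN nodd; rewrite size_t; apply.
Qed.

Lemma simsun_word_stats n w : 0 < n -> w \in simsun_words n ->
  [/\ des_seq w = descents w, pk_seq w + first_descent w = descents w
    & altruns (0 :: w) = 2 * descents w + ~~ last_descent w].
Proof.
move=> n_gt0 /simsun_wordsP [size_w _ uniq_w nodd].
have w_nil : w != [::] by rewrite -size_eq0 size_w -lt0n.
split; [exact: des_seqE | | exact: uprun_descents].
by rewrite pk_seqE peaks_add_first_descent //; case/andP: uniq_w.
Qed.

Lemma count_split_in (T : eqType) (a b c : pred T) s :
  {in s, forall x, a x = b x + c x :> nat} -> count a s = count b s + count c s.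
Proof.
elim: s => [//|x s IH] abc /=.
rewrite abc ?mem_head // IH; first lia.
by move=> y ys; apply: abc; rewrite inE ys orbT.
Qed.

Theorem mainTheorem8 (n : nat) : 1 <= n ->
  forall k : nat,
    S_num n k = T_num n (2 * k) + T_num n (2 * k + 1) /\
    P_num n k = T_num n (2 * k + 1) + T_num n (2 * k + 2).
Proof.
move=> n_gt0 k.
have stats := simsun_word_stats n_gt0.
have [S_des P_pk T_up] :
    [/\ S_num n k = count (fun w => des_seq w == k) (simsun_words n),
        P_num n k = count (fun w => pk_seq w == k) (simsun_words n) &
        forall j, T_num n j = count (fun w => altruns (0 :: w) == j) (simsun_words n)].
  by split=> [||j]; apply: card_simsun.
have T_des_last j b :
    T_num n (2 * j + ~~ b) = count (pred1 (j, b)) (map des_last (simsun_words n)).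
  rewrite T_up count_map; apply: eq_in_count => w /stats [_ _ ->].
  by rewrite /= /des_last xpair_eqE; case: b; case: (last_descent w) => /=; lia.
(* [2 * j + ~~ b] is [2 * j + 1] for [b = false] by conversion, [2 * j + 0] otherwise *)
rewrite -{1}[2 * k]addn0 (T_des_last k true) (T_des_last k false).
rewrite (_ : 2 * k + 2 = 2 * k.+1 + ~~ true) ?(T_des_last k.+1 true); last by lia.
split.
  rewrite S_des !count_map; apply: count_split_in => w /stats [-> _ _].
  by rewrite /des_last /= !xpair_eqE; case: (last_descent w); rewrite ?andbT ?andbF ?addn0.
rewrite -!(seq.permP (perm_des_first_last n_gt0)) !count_map P_pk.
apply: count_split_in => w /stats [_ pk_des _].
rewrite /des_first /= !xpair_eqE -pk_des.
by case: (first_descent w) => /=; lia.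
Qed.
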